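(* Let $l,l'$ be lines intersecting at a point $O$, and let $X,X'$ be two points lying in the same quadrant into which $l,l'$ divide the plane. Let $M$ be the midpoint of $X,X'$, let $Y$ be the intersection of $l$ with the reflection of $l'$ about $M$, and let $Y'$ be the intersection of $l'$ with the reflection of $l$ about $M$, so that $XYX'Y'$ is a (possibly degenerate) parallelogram. Let $\triangle OYY'$ denote the closed triangle (including its boundary). Then: (1) if $\mathrm{disprod}_{l,l'}(X)<\mathrm{disprod}_{l,l'}(X')$, then $X\in\triangle OYY'$ and $X'\notin\triangle OYY'$; (2) if $\mathrm{disprod}_{l,l'}(X)>\mathrm{disprod}_{l,l'}(X')$, then $X\notin\triangle OYY'$ and $X'\in\triangle OYY'$; (3) if $\mathrm{disprod}_{l,l'}(X)=\mathrm{disprod}_{l,l'}(X')$, then $XYX'Y'$ is degenerate, i.e. its four corners lie on a common line.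
   Context: $d_l(X)$ denotes the distance from the point $X$ to the line $l$, and $\mathrm{disprod}_{l,l'}(X)=d_l(X)\cdot d_{l'}(X)$. *)

From HB Require Import structures.
From mathcomp Require Import all_boot all_order all_algebra.
From mathcomp Require Import boolp classical_sets reals.
Set Implicit Arguments. Unset Strict Implicit. Unset Printing Implicit Defensive.
Import Order.TTheory GRing.Theory Num.Theory.
Local Open Scope ring_scope.
Local Open Scope classical_set_scope.

Section Plane.
Variable R : realType.

Definition pt := (R * R)%type.

Definition padd (p q : pt) : pt := (p.1 + q.1, p.2 + q.2).
Definition pscale (t : R) (p : pt) : pt := (t * p.1, t * p.2).

Definition dist (p q : pt) : R :=
  Num.sqrt ((p.1 - q.1) ^+ 2 + (p.2 - q.2) ^+ 2).

Definition line_through (P u : pt) : set pt :=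
  [set Z | exists t : R, Z = padd P (pscale t u)].

Definition is_line (L : set pt) : Prop :=
  exists P u : pt, u != (0, 0) /\ L = line_through P u.

Definition dist_line (L : set pt) (X : pt) : R :=
  inf [set dist X Z | Z in L].

Definition disprod (l l' : set pt) (X : pt) : R :=
  dist_line l X * dist_line l' X.

Definition segment (X Y : pt) : set pt :=
  [set Z | exists t : R, 0 <= t <= 1 /\ Z = padd (pscale (1 - t) X) (pscale t Y)].

Definition same_side (L : set pt) (X Y : pt) : Prop :=
  ~ L X /\ ~ L Y /\ segment X Y `&` L = set0.

Definition same_quadrant (l l' : set pt) (X Y : pt) : Prop :=
  same_side l X Y /\ same_side l' X Y.

Definition midpoint (X Y : pt) : pt := ((X.1 + Y.1) / 2, (X.2 + Y.2) / 2).

Definition reflect_pt (M Z : pt) : pt := (2 * M.1 - Z.1, 2 * M.2 - Z.2).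

Definition reflect_set (M : pt) (L : set pt) : set pt := reflect_pt M @` L.

Definition triangle (A B C : pt) : set pt :=
  [set Z | exists a b c : R, [/\ 0 <= a, 0 <= b, 0 <= c, a + b + c = 1 &
     Z = padd (padd (pscale a A) (pscale b B)) (pscale c C)]].

Definition collinear4 (A B C D : pt) : Prop :=
  exists L : set pt, is_line L /\ L A /\ L B /\ L C /\ L D.

End Plane.

(** The affine forms [cross P u] and [cross Q v], vanishing exactly on l and l',
   are oblique coordinates centred at O, and d_l, d_l' are their absolute values
   up to constant factors.  Write X = (p, q) and X' = (p', q'); being in the same
   quadrant means p p' > 0 and q q' > 0.  As the forms are affine, reflecting
   about the midpoint gives Y' = (p + p', 0) and Y = (0, q + q'), so the triangle
   O Y Y' is cut out by  x/(p + p') >= 0, y/(q + q') >= 0, x/(p + p') + y/(q + q') <= 1.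
   For X the slack of the last inequality is (p'q' - pq)/((p + p')(q + q')), whose
   sign is that of (p'q')^2 - (pq)^2, while disprod(X) is proportional to |pq|.
   In the equality case both X and X' lie on the line
   x/(p + p') + y/(q + q') = 1 through Y and Y'. *)

From HB Require Import structures.
From mathcomp Require Import all_boot all_order all_algebra.
From mathcomp Require Import boolp classical_sets reals.
From mathcomp Require Import ring lra.
Import Order.TTheory GRing.Theory Num.Theory.
Local Open Scope ring_scope.
Local Open Scope classical_set_scope.

Section Plane.
Context {R : realType}.
Implicit Types (P Q u v w Z W A B C : pt R) (t : R).

Definition norm2 u : R := u.1 ^+ 2 + u.2 ^+ 2.

Definition cross P u Z : R := (Z.1 - P.1) * u.2 - (Z.2 - P.2) * u.1.

Definition proj_coef P u Z : R :=
  ((Z.1 - P.1) * u.1 + (Z.2 - P.2) * u.2) / norm2 u.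

Lemma norm2_gt0 u : u != (0, 0) -> 0 < norm2 u.
Proof.
case: u => a b; rewrite /norm2 /=.
have [->|a0] := eqVneq a 0; last by rewrite ltr_pwDl ?sqr_ge0 ?exprn_even_gt0.
have [->|b0] := eqVneq b 0; first by rewrite eqxx.
by rewrite expr0n add0r exprn_even_gt0.
Qed.

Lemma cross_shift P u A t w :
  cross P u (padd A (pscale t w)) = cross P u A + t * (w.1 * u.2 - w.2 * u.1).
Proof. by rewrite /cross /=; ring. Qed.

Lemma cross_comb3 P u A B C a b c : a + b + c = 1 ->
  cross P u (padd (padd (pscale a A) (pscale b B)) (pscale c C)) =
  a * cross P u A + b * cross P u B + c * cross P u C.
Proof. by move=> abc1; rewrite -[a](addrK (b + c)) addrA abc1 /cross /=; ring. Qed.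

Lemma cross_segment P u A B t :
  cross P u (padd (pscale (1 - t) A) (pscale t B)) =
  (1 - t) * cross P u A + t * cross P u B.
Proof. by rewrite /cross /=; ring. Qed.

Lemma cross_along P u A B t :
  cross P u (padd A (pscale t (B.1 - A.1, B.2 - A.2))) =
  (1 - t) * cross P u A + t * cross P u B.
Proof. by rewrite /cross /=; ring. Qed.

Lemma cross_reflect P u A B Z :
  cross P u (reflect_pt (midpoint A B) Z) = cross P u A + cross P u B - cross P u Z.
Proof.
have twice_half (x : R) : 2 * (x / 2) = x by rewrite mulrC divfK ?pnatr_eq0.
by rewrite /cross /reflect_pt /midpoint /= !twice_half; ring.
Qed.

Lemma cross_inj P u Q v Z W : u.1 * v.2 - u.2 * v.1 != 0 ->
  cross P u Z = cross P u W -> cross Q v Z = cross Q v W -> Z = W.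
Proof.
move=> uv0 eqPu eqQv.
have cramer1 : (u.1 * v.2 - u.2 * v.1) * (Z.1 - W.1) =
    u.1 * (cross Q v Z - cross Q v W) - v.1 * (cross P u Z - cross P u W).
  by rewrite /cross; ring.
have cramer2 : (u.1 * v.2 - u.2 * v.1) * (Z.2 - W.2) =
    u.2 * (cross Q v Z - cross Q v W) - v.2 * (cross P u Z - cross P u W).
  by rewrite /cross; ring.
rewrite eqPu eqQv !subrr !mulr0 subrr in cramer1 cramer2.
move/eqP: cramer1; move/eqP: cramer2; rewrite !mulf_eq0 (negbTE uv0) !subr_eq0.
by case: Z W {eqPu eqQv} => [z1 z2] [w1 w2] /= /eqP-> /eqP->.
Qed.

Lemma line_throughP P u Z : u != (0, 0) -> line_through P u Z <-> cross P u Z = 0.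
Proof.
move=> u0; split; first by case=> t ->; rewrite /cross /=; ring.
move=> cross0; exists (proj_coef P u Z).
have n0 : norm2 u != 0 by rewrite gt_eqF ?norm2_gt0.
apply: (@cross_inj P u P (- u.2, u.1)).
- by rewrite /= mulrN opprK -expr2 -expr2 -/(norm2 u).
- by rewrite cross0 /cross /=; ring.
- by rewrite /cross /proj_coef /= /norm2; field.
Qed.

Lemma dist_line_through P u Z : u != (0, 0) ->
  dist_line (line_through P u) Z = Num.sqrt (cross P u Z ^+ 2 / norm2 u).
Proof.
move=> u0; have n_gt0 : 0 < norm2 u by exact: norm2_gt0.
have n0 : norm2 u != 0 by rewrite gt_eqF.
pose d2 t := (Z.1 - (padd P (pscale t u)).1) ^+ 2 + (Z.2 - (padd P (pscale t u)).2) ^+ 2.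
have lagrange t : norm2 u * d2 t =
    cross P u Z ^+ 2 + ((Z.1 - P.1) * u.1 + (Z.2 - P.2) * u.2 - t * norm2 u) ^+ 2.
  by rewrite /d2 /norm2 /cross /=; ring.
rewrite /dist_line /dist -/(d2 _); apply/le_anti/andP; split.
  apply: ge_inf; first by exists 0 => _ [W _ <-]; exact: sqrtr_ge0.
  exists (padd P (pscale (proj_coef P u Z) u)); first by exists (proj_coef P u Z).
  congr Num.sqrt; apply: (mulfI n0).
  by rewrite lagrange /proj_coef divfK // subrr expr0n addr0 mulrC divfK.
apply: lb_le_inf.
  by exists (dist Z P), P => //; exists 0; rewrite /padd /pscale /= !mul0r !addr0; case: (P).
move=> _ [W [t ->] <-]; rewrite ler_sqrt ?addr_ge0 ?sqr_ge0 // ler_pdivrMr // mulrC.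
by rewrite lagrange lerDl sqr_ge0.
Qed.

Lemma disprod_line_through P u Q v Z : u != (0, 0) -> v != (0, 0) ->
  disprod (line_through P u) (line_through Q v) Z =
  Num.sqrt ((cross P u Z * cross Q v Z) ^+ 2 / (norm2 u * norm2 v)).
Proof.
move=> u0 v0; rewrite /disprod !dist_line_through // -sqrtrM; last first.
  by rewrite divr_ge0 ?sqr_ge0 // ltW ?norm2_gt0.
by congr Num.sqrt; rewrite exprMn invfM; ring.
Qed.

Lemma disprod_le_line_through P u Q v Z W : u != (0, 0) -> v != (0, 0) ->
  (disprod (line_through P u) (line_through Q v) Z <=
   disprod (line_through P u) (line_through Q v) W) =
  ((cross P u Z * cross Q v Z) ^+ 2 <= (cross P u W * cross Q v W) ^+ 2).
Proof.
move=> u0 v0; have K_gt0 : 0 < norm2 u * norm2 v by rewrite mulr_gt0 ?norm2_gt0.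
by rewrite !disprod_line_through // ler_sqrt ?divr_ge0 ?sqr_ge0 ?(ltW K_gt0) // ler_pM2r ?invr_gt0.
Qed.

Lemma disprod_lt_line_through P u Q v Z W : u != (0, 0) -> v != (0, 0) ->
  (disprod (line_through P u) (line_through Q v) Z <
   disprod (line_through P u) (line_through Q v) W) =
  ((cross P u Z * cross Q v Z) ^+ 2 < (cross P u W * cross Q v W) ^+ 2).
Proof. by move=> u0 v0; rewrite !ltNge disprod_le_line_through. Qed.

Lemma disprod_eq_line_through P u Q v Z W : u != (0, 0) -> v != (0, 0) ->
  (disprod (line_through P u) (line_through Q v) Z ==
   disprod (line_through P u) (line_through Q v) W) =
  ((cross P u Z * cross Q v Z) ^+ 2 == (cross P u W * cross Q v W) ^+ 2).
Proof. by move=> u0 v0; rewrite !eq_le !disprod_le_line_through. Qed.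

Lemma same_side_cross_gt0 {P u X X'} : u != (0, 0) ->
  same_side (line_through P u) X X' -> 0 < cross P u X * cross P u X'.
Proof.
move=> u0 [offX [offX' no_cut]].
have q0 : cross P u X != 0 by apply/eqP => /(line_throughP _ _ _ u0).
have q'0 : cross P u X' != 0 by apply/eqP => /(line_throughP _ _ _ u0).
set q := cross P u X in q0 *; set q' := cross P u X' in q'0 *.
rewrite ltNge; apply/negP => qq'_le0.
have qq'_lt0 : q * q' < 0 by rewrite lt_neqAle qq'_le0 mulf_neq0.
have d_gt0 : 0 < q ^+ 2 - q * q' by rewrite subr_gt0 (lt_le_trans qq'_lt0) ?sqr_ge0.
(* t = q / (q - q') is where the affine form vanishes on the segment; squaring
   q keeps the denominator positive *)
pose t := q ^+ 2 / (q ^+ 2 - q * q').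
suff : (segment X X' `&` line_through P u) (padd (pscale (1 - t) X) (pscale t X')).
  by rewrite no_cut.
split.
  exists t; split => //; rewrite divr_ge0 ?sqr_ge0 ?(ltW d_gt0) //=.
  by rewrite ler_pdivrMr // mul1r lerDl oppr_ge0 ltW.
apply/line_throughP => //; rewrite cross_segment -/q -/q' /t.
by field; rewrite gt_eqF.
Qed.

Lemma meet_once_nonparallel {P u Q v O} : u != (0, 0) -> v != (0, 0) ->
  line_through P u `&` line_through Q v = [set O] -> u.1 * v.2 - u.2 * v.1 != 0.
Proof.
move=> u0 v0 meet; apply/eqP => par.
have [/(line_throughP _ _ _ u0) OP /(line_throughP _ _ _ v0) OQ] :
  (line_through P u `&` line_through Q v) O by rewrite meet.
have : (line_through P u `&` line_through Q v) (padd O (pscale 1 u)).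
  by split; apply/line_throughP; rewrite // cross_shift ?OP ?OQ ?par; ring.
rewrite meet => /=; case: (O) (u) u0 => [o1 o2] [u1 u2] /= u0.
rewrite /padd /pscale /= !mul1r => -[o1E o2E].
suff [u1_0 u2_0] : u1 = 0 /\ u2 = 0 by rewrite u1_0 u2_0 eqxx in u0.
by split; lra.
Qed.

Lemma mulr_addr_gt0 {p p' : R} : 0 < p * p' -> 0 < p * (p + p').
Proof. by move=> pp'; rewrite mulrDr ltr_wpDl // -expr2 sqr_ge0. Qed.

Lemma ratio_gt0 (p p' : R) : 0 < p * p' -> 0 < p / (p + p').
Proof.
move=> /mulr_addr_gt0 pS.
have S0 : p + p' != 0 by apply: contraTneq pS => ->; rewrite mulr0 ltxx.
rewrite -(pmulr_lgt0 _ (_ : 0 < (p + p') ^+ 2)) ?exprn_even_gt0 //.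
by rewrite expr2 mulrA divfK.
Qed.

Lemma ratio_sum_le1 (p p' q q' : R) : 0 < p * p' -> 0 < q * q' ->
  (p / (p + p') + q / (q + q') <= 1) = ((p * q) ^+ 2 <= (p' * q') ^+ 2).
Proof.
move=> pp' qq'; have pS := mulr_addr_gt0 pp'; have qS := mulr_addr_gt0 qq'.
have /andP[p0 pS0] : (p != 0) && (p + p' != 0) by rewrite -negb_or -mulf_eq0 gt_eqF.
have /andP[q0 qS0] : (q != 0) && (q + q' != 0) by rewrite -negb_or -mulf_eq0 gt_eqF.
have gap : 1 - (p / (p + p') + q / (q + q')) =
    (p' * q' - p * q) * (p * q) / (p * (p + p') * (q * (q + q'))).
  by field; rewrite p0 pS0 q0 qS0.
have same_sign : 0 < (p * q) * (p' * q') by rewrite mulrACA mulr_gt0.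
rewrite -subr_ge0 gap pmulr_lge0 ?invr_gt0 ?(mulr_gt0 pS qS) //.
by apply/idP/idP => ?; nra.
Qed.

Section ObliqueAxes.
Context {P u Q v O Y Y' : pt R}.
Hypothesis nonparallel : u.1 * v.2 - u.2 * v.1 != 0.
Hypotheses (O_l : cross P u O = 0) (O_l' : cross Q v O = 0).
Hypotheses (Y_l : cross P u Y = 0) (Y'_l' : cross Q v Y' = 0).
Hypotheses (Y_off : cross Q v Y != 0) (Y'_off : cross P u Y' != 0).

Lemma triangle_axesP Z : triangle O Y Y' Z <->
  [/\ 0 <= cross P u Z / cross P u Y', 0 <= cross Q v Z / cross Q v Y &
      cross P u Z / cross P u Y' + cross Q v Z / cross Q v Y <= 1].
Proof.
split.
  case=> a [b [c [a0 b0 c0 abc ->]]].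
  rewrite !cross_comb3 // O_l O_l' Y_l Y'_l' !mulr0 !add0r addr0 !mulfK //.
  by split => //; rewrite addrC -abc -addrA lerDr.
case=> x0 y0 sum_le1.
set s := _ + _ in sum_le1.
have sum1 : 1 - s + cross Q v Z / cross Q v Y + cross P u Z / cross P u Y' = 1.
  by rewrite /s; ring.
exists (1 - s), (cross Q v Z / cross Q v Y), (cross P u Z / cross P u Y').
split => //; first by rewrite subr_ge0.
apply: (@cross_inj P u Q v) => //; rewrite cross_comb3 //.
  by rewrite O_l Y_l !mulr0 !add0r divfK.
by rewrite O_l' Y'_l' !mulr0 add0r addr0 divfK.
Qed.

Lemma triangle_quadrantP Z :
  0 < cross P u Z / cross P u Y' -> 0 < cross Q v Z / cross Q v Y ->
  triangle O Y Y' Z <-> cross P u Z / cross P u Y' + cross Q v Z / cross Q v Y <= 1.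
Proof.
move=> x_gt0 y_gt0; rewrite triangle_axesP.
by split => [[] //|]; split => //; exact: ltW.
Qed.

Lemma axes_direction_neq0 : (Y'.1 - Y.1, Y'.2 - Y.2) != (0, 0).
Proof.
apply: contra_neq Y_off => -[/subr0_eq e1 /subr0_eq e2].
by rewrite -Y'_l' /cross e1 e2.
Qed.

Lemma line_axes Z :
  cross P u Z / cross P u Y' + cross Q v Z / cross Q v Y = 1 ->
  line_through Y (Y'.1 - Y.1, Y'.2 - Y.2) Z.
Proof.
move=> sum1; exists (cross P u Z / cross P u Y').
apply: (@cross_inj P u Q v) => //; rewrite cross_along.
  by rewrite Y_l mulr0 add0r divfK.
by rewrite Y'_l' mulr0 addr0 -sum1 addrAC subrr add0r divfK.
Qed.

End ObliqueAxes.

Section ReflectedPair.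
Context {P u Q v O X X' Y Y' : pt R}.
Local Notation p := (cross P u X).
Local Notation p' := (cross P u X').
Local Notation q := (cross Q v X).
Local Notation q' := (cross Q v X').
Hypothesis nonparallel : u.1 * v.2 - u.2 * v.1 != 0.
Hypotheses (O_l : cross P u O = 0) (O_l' : cross Q v O = 0).
Hypotheses (Y_l : cross P u Y = 0) (Y'_l' : cross Q v Y' = 0).
Hypotheses (pp' : 0 < p * p') (qq' : 0 < q * q').
Hypotheses (Y'_coord : cross P u Y' = p + p') (Y_coord : cross Q v Y = q + q').

Let Y'_off : cross P u Y' != 0.
Proof. by rewrite Y'_coord; apply: contraTneq (mulr_addr_gt0 pp') => ->; rewrite mulr0 ltxx. Qed.

Let Y_off : cross Q v Y != 0.
Proof. by rewrite Y_coord; apply: contraTneq (mulr_addr_gt0 qq') => ->; rewrite mulr0 ltxx. Qed.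

Lemma triangle_reflectedP : triangle O Y Y' X <-> (p * q) ^+ 2 <= (p' * q') ^+ 2.
Proof.
have quadrantP := triangle_quadrantP nonparallel O_l O_l' Y_l Y'_l' Y_off Y'_off.
by rewrite quadrantP ?Y'_coord ?Y_coord ?ratio_sum_le1 ?ratio_gt0.
Qed.

Lemma reflected_collinear : (p * q) ^+ 2 = (p' * q') ^+ 2 -> collinear4 X Y X' Y'.
Proof.
move=> sq_eq; have p'p : 0 < p' * p by rewrite mulrC.
have q'q : 0 < q' * q by rewrite mulrC.
have sumX : p / (p + p') + q / (q + q') <= 1 by rewrite ratio_sum_le1 // sq_eq.
have sumX' : p' / (p + p') + q' / (q + q') <= 1.
  by rewrite [p + _]addrC [q + _]addrC ratio_sum_le1 // sq_eq.
have split_p : p / (p + p') + p' / (p + p') = 1 by rewrite -mulrDl divff // -Y'_coord.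
have split_q : q / (q + q') + q' / (q + q') = 1 by rewrite -mulrDl divff // -Y_coord.
exists (line_through Y (Y'.1 - Y.1, Y'.2 - Y.2)); split.
  by exists Y, (Y'.1 - Y.1, Y'.2 - Y.2); rewrite (axes_direction_neq0 Y'_l' Y_off).
split; [|split; [|split]]; apply: (line_axes nonparallel Y_l Y'_l' Y_off Y'_off).
- by rewrite Y'_coord Y_coord; lra.
- by rewrite Y_l mul0r add0r divff.
- by rewrite Y'_coord Y_coord; lra.
- by rewrite Y'_l' mul0r addr0 divff.
Qed.

End ReflectedPair.

End Plane.

Theorem lemma8 (R : realType) (l l' : set (pt R)) (O X X' Y Y' : pt R) :
  is_line l -> is_line l' -> l `&` l' = [set O] ->
  same_quadrant l l' X X' ->
  l Y -> reflect_set (midpoint X X') l' Y ->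
  l' Y' -> reflect_set (midpoint X X') l Y' ->
  [/\ (disprod l l' X < disprod l l' X' ->
         triangle O Y Y' X /\ ~ triangle O Y Y' X'),
      (disprod l l' X > disprod l l' X' ->
         ~ triangle O Y Y' X /\ triangle O Y Y' X') &
      (disprod l l' X = disprod l l' X' -> collinear4 X Y X' Y')].
Proof.
move=> [P [u [u0 ->]]] [Q [v [v0 ->]]] meet [side_l side_l'].
move=> /(line_throughP _ _ _ u0) Y_l [Z /(line_throughP _ _ _ v0) Z_l' YE].
move=> /(line_throughP _ _ _ v0) Y'_l' [Z' /(line_throughP _ _ _ u0) Z'_l Y'E].
have nonpar := meet_once_nonparallel u0 v0 meet.
have [/(line_throughP _ _ _ u0) O_l /(line_throughP _ _ _ v0) O_l'] :
  (line_through P u `&` line_through Q v) O by rewrite meet.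
have pp' := same_side_cross_gt0 u0 side_l; have qq' := same_side_cross_gt0 v0 side_l'.
have Y'_coord : cross P u Y' = cross P u X + cross P u X'.
  by rewrite -Y'E cross_reflect Z'_l subr0.
have Y_coord : cross Q v Y = cross Q v X + cross Q v X'.
  by rewrite -YE cross_reflect Z_l' subr0.
have triX := triangle_reflectedP nonpar O_l O_l' Y_l Y'_l' pp' qq' Y'_coord Y_coord.
have triX' : triangle O Y Y' X' <->
    (cross P u X' * cross Q v X') ^+ 2 <= (cross P u X * cross Q v X) ^+ 2.
  by apply: triangle_reflectedP; rewrite // (mulrC, addrC).
rewrite !disprod_lt_line_through //; split.
- move=> lt; split; first by apply/triX; exact: ltW.
  by move/triX'; rewrite leNgt lt.
- move=> lt; split; last by apply/triX'; exact: ltW.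
  by move/triX; rewrite leNgt lt.
move=> /eqP; rewrite disprod_eq_line_through // => /eqP.
exact: reflected_collinear.
Qed.
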